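(* Let $H'=\begin{bmatrix}0\\1\\0\end{bmatrix}$, $V'=\begin{bmatrix}0&1&0\end{bmatrix}$, $\mathcal{C}'=Av_{\mathfrak{P}}(H',V')$, and for $n\ge1$ let $c'_n$ be the number of polyominoes in $\mathcal{C}'$ whose minimal bounding rectangle is an $n\times n$ square. Then $c'_n\ge\lfloor n/2\rfloor!$ for all $n\ge1$.
   Context: A polyomino is a finite union of unit cells of $\mathbb{Z}\times\mathbb{Z}$ that is connected via edge adjacency, considered up to translation, identified with the binary matrix of its minimal bounding rectangle (entry $1$ iff the corresponding unit square is a cell). A matrix is a submatrix of another if obtained by deleting rows and/or columns; $Av_{\mathfrak{P}}(\mathcal{M})$ is the set of polyominoes with no submatrix in $\mathcal{M}$. *)

From mathcomp Require Import all_boot all_algebra.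
Set Implicit Arguments. Unset Strict Implicit. Unset Printing Implicit Defensive.

(* A binary matrix M (m rows, n columns) with entry true iff the unit square is a cell. *)

Definition edge_adj m n (x y : 'I_m * 'I_n) : bool :=
  ((x.1 == y.1 :> nat) && ((x.2.+1 == y.2 :> nat) || (y.2.+1 == x.2 :> nat))) ||
  ((x.2 == y.2 :> nat) && ((x.1.+1 == y.1 :> nat) || (y.1.+1 == x.1 :> nat))).

Definition cell_rel m n (M : 'M[bool]_(m, n)) : rel ('I_m * 'I_n) :=
  fun x y => [&& M x.1 x.2, M y.1 y.2 & edge_adj x y].

(* M is (the bounding-rectangle matrix of) a polyomino: nonempty, every row and
   every column of the rectangle contains a cell (so the rectangle is minimal),
   and the set of cells is edge-connected. *)
Definition is_polyomino m n (M : 'M[bool]_(m, n)) : bool :=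
  [&& [exists x : 'I_m * 'I_n, M x.1 x.2],
      [forall i : 'I_m, exists j : 'I_n, M i j],
      [forall j : 'I_n, exists i : 'I_m, M i j] &
      [forall x : 'I_m * 'I_n, forall y : 'I_m * 'I_n,
          (M x.1 x.2 && M y.1 y.2) ==> connect (cell_rel M) x y]].

Definition submatrix p q m n (P : 'M[bool]_(p, q)) (M : 'M[bool]_(m, n)) : bool :=
  [exists f : {ffun 'I_p -> 'I_m}, exists g : {ffun 'I_q -> 'I_n},
    [&& [forall i1 : 'I_p, forall i2 : 'I_p, (i1 < i2) ==> (f i1 < f i2)],
        [forall j1 : 'I_q, forall j2 : 'I_q, (j1 < j2) ==> (g j1 < g j2)] &
        [forall i : 'I_p, forall j : 'I_q, M (f i) (g j) == P i j]]].

Definition Hp : 'M[bool]_(3, 1) := \matrix_(i < 3, j < 1) (i == 1 :> nat).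
Definition Vp : 'M[bool]_(1, 3) := \matrix_(i < 1, j < 3) (j == 1 :> nat).

Definition in_Cp m n (M : 'M[bool]_(m, n)) : bool :=
  [&& is_polyomino M, ~~ submatrix Hp M & ~~ submatrix Vp M].

Definition cp (n : nat) : nat := #|[pred M : 'M[bool]_(n, n) | in_Cp M]|.

(* For a permutation s of {0, ..., n/2 - 1}, remove from the full n x n square
   exactly the cells (2i+1, 2 s(i)+1).  All even rows and the first column stay
   full, so the remaining cells form a polyomino with an n x n bounding square.
   Each row and each column loses at most one cell, whereas an occurrence of H'
   (resp. V') needs two empty cells in one column (resp. row).  Distinct
   permutations give distinct squares, hence c'_n >= (n/2)!. *)
From mathcomp Require Import all_boot all_algebra.
From mathcomp Require Import perm zify.
Set Implicit Arguments. Unset Strict Implicit.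

Lemma cell_rel_sym m n (M : 'M[bool]_(m, n)) : symmetric (cell_rel M).
Proof.
move=> x y; rewrite /cell_rel /edge_adj !andbA [M x.1 x.2 && _]andbC.
by rewrite (eq_sym (x.1 : nat)) (eq_sym (x.2 : nat)) (orbC (x.2.+1 == _))
  (orbC (x.1.+1 == _)).
Qed.

Lemma connect_chain (T : finType) (e : rel T) (f : nat -> T) c :
  (forall k, k < c -> e (f k.+1) (f k)) -> connect e (f c) (f 0).
Proof.
elim: c => [|c IH] Hf; first exact: connect0.
apply: connect_trans (connect1 (Hf c (ltnSn c))) (IH _) => k Hk.
by apply: Hf; apply: ltnW.
Qed.

Section FullEvenRows.

Variables (n' : nat) (M : 'M[bool]_(n'.+1, n'.+1)).
Hypothesis even_row_full : forall r c : 'I_n'.+1, ~~ odd r -> M r c.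
Hypothesis first_col_full : forall r : 'I_n'.+1, M r ord0.

Let origin : 'I_n'.+1 * 'I_n'.+1 := (ord0, ord0).

Let inord0 : inord 0 = ord0 :> 'I_n'.+1.
Proof. by apply: val_inj; rewrite /= inordK. Qed.

Lemma connect_even_row_origin (r c : 'I_n'.+1) :
  ~~ odd r -> connect (cell_rel M) (r, c) origin.
Proof.
move=> Hr.
have along_row : connect (cell_rel M) (r, c) (r, ord0).
  rewrite -inord0 -{1}[c]inord_val.
  apply: (@connect_chain _ _ (fun k => (r, inord k))) => k Hk.
  have Hk1 : k.+1 < n'.+1 by apply: leq_ltn_trans Hk (ltn_ord c).
  rewrite /cell_rel /= !even_row_full //= /edge_adj /= !inordK ?(ltnW Hk1) //.
  by rewrite eqxx /= eqxx orbT.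
have along_col : connect (cell_rel M) (r, ord0) origin.
  rewrite /origin -inord0 -{1}[r]inord_val.
  apply: (@connect_chain _ _ (fun k => (inord k, inord 0))) => k Hk.
  have Hk1 : k.+1 < n'.+1 by apply: leq_ltn_trans Hk (ltn_ord r).
  rewrite /cell_rel /= inord0 !first_col_full /edge_adj /= !inordK ?(ltnW Hk1) //.
  by rewrite eqxx !orbT.
exact: connect_trans along_row along_col.
Qed.

Lemma connect_origin (x : 'I_n'.+1 * 'I_n'.+1) :
  M x.1 x.2 -> connect (cell_rel M) x origin.
Proof.
case: x => r c /= Mrc; have [Hr | Hr] := boolP (odd r); last first.
  exact: connect_even_row_origin.
have r_pos : 0 < r by case: (nat_of_ord r) Hr.
have r_pred : r.-1 < n'.+1 by apply: leq_ltn_trans (leq_pred r) (ltn_ord r).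
have even_pred : ~~ odd (inord r.-1 : 'I_n'.+1) by rewrite inordK // -oddS prednK.
apply: connect_trans (connect1 _) (connect_even_row_origin c even_pred).
rewrite /cell_rel /= Mrc even_row_full //= /edge_adj /= inordK // eqxx /=.
by rewrite prednK // eqxx !orbT.
Qed.

Lemma full_even_rows_is_polyomino : is_polyomino M.
Proof.
apply/and4P; split.
- by apply/existsP; exists origin; rewrite first_col_full.
- by apply/forallP=> r; apply/existsP; exists ord0; rewrite first_col_full.
- by apply/forallP=> c; apply/existsP; exists ord0; rewrite even_row_full.
apply/forallP=> x; apply/forallP=> y; apply/implyP=> /andP [Mx My].
apply: connect_trans (connect_origin Mx) _.
by rewrite (sym_connect_sym (@cell_rel_sym _ _ M)) connect_origin.
Qed.

End FullEvenRows.

Lemma not_submatrix_Hp m n (M : 'M[bool]_(m, n)) :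
  (forall i1 i2 j, ~~ M i1 j -> ~~ M i2 j -> i1 = i2) -> ~~ submatrix Hp M.
Proof.
move=> col_hole_uniq; apply/negP=> /existsP [f /existsP [g /and3P [f_incr _ fgP]]].
have hole (i : 'I_3) : i != 1 :> nat -> ~~ M (f i) (g ord0).
  by move=> Hi; rewrite (eqP (forallP (forallP fgP i) ord0)) mxE.
pose i0 : 'I_3 := Ordinal (isT : 0 < 3); pose i2 : 'I_3 := Ordinal (isT : 2 < 3).
have := implyP (forallP (forallP f_incr i0) i2) isT.
by rewrite (col_hole_uniq _ _ _ (hole i0 isT) (hole i2 isT)) ltnn.
Qed.

Lemma not_submatrix_Vp m n (M : 'M[bool]_(m, n)) :
  (forall i j1 j2, ~~ M i j1 -> ~~ M i j2 -> j1 = j2) -> ~~ submatrix Vp M.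
Proof.
move=> row_hole_uniq; apply/negP=> /existsP [f /existsP [g /and3P [_ g_incr fgP]]].
have hole (j : 'I_3) : j != 1 :> nat -> ~~ M (f ord0) (g j).
  by move=> Hj; rewrite (eqP (forallP (forallP fgP ord0) j)) mxE.
pose i0 : 'I_3 := Ordinal (isT : 0 < 3); pose i2 : 'I_3 := Ordinal (isT : 2 < 3).
have := implyP (forallP (forallP g_incr i0) i2) isT.
by rewrite (row_hole_uniq _ _ _ (hole i0 isT) (hole i2 isT)) ltnn.
Qed.

Section PermutationSquare.

Variable k : nat.
Implicit Type s : {perm 'I_k}.

Definition perm_hole s (r c : nat) : bool :=
  [exists i : 'I_k, (r == i.*2.+1) && (c == (s i).*2.+1)].

Lemma perm_hole_odd s r c : perm_hole s r c -> odd r && odd c.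
Proof. by move=> /existsP [i /andP [/eqP -> /eqP ->]]; rewrite /= !odd_double. Qed.

Lemma perm_hole_row_uniq s r c1 c2 : perm_hole s r c1 -> perm_hole s r c2 -> c1 = c2.
Proof.
move=> /existsP [i /andP [/eqP -> /eqP ->]] /existsP [j /andP [/eqP ij /eqP ->]].
by have -> : i = j by apply: ord_inj; lia.
Qed.

Lemma perm_hole_col_uniq s r1 r2 c : perm_hole s r1 c -> perm_hole s r2 c -> r1 = r2.
Proof.
move=> /existsP [i /andP [/eqP -> /eqP ->]] /existsP [j /andP [/eqP -> /eqP sij]].
by have /perm_inj -> : s i = s j by apply: ord_inj; lia.
Qed.

Lemma perm_hole_graph s (i : 'I_k) : perm_hole s i.*2.+1 (s i).*2.+1.
Proof. by apply/existsP; exists i; rewrite !eqxx. Qed.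

Lemma perm_hole_graph_inj s t :
  (forall i : 'I_k, perm_hole t i.*2.+1 (s i).*2.+1) -> s = t.
Proof.
move=> hole_t; apply/permP=> i.
have /existsP [j /andP [/eqP ij /eqP sij]] := hole_t i.
have eq_ij : i = j by apply: ord_inj; lia.
by rewrite -eq_ij in sij; apply: ord_inj; lia.
Qed.

End PermutationSquare.

Definition perm_square n (s : {perm 'I_(n./2)}) : 'M[bool]_(n, n) :=
  \matrix_(r, c) ~~ perm_hole s r c.

Lemma perm_square_in_Cp n (s : {perm 'I_(n.+1./2)}) : in_Cp (perm_square s).
Proof.
have hole_of (r c : 'I_n.+1) : ~~ perm_square s r c -> perm_hole s r c.
  by rewrite mxE negbK.
apply/and3P; split.
- apply: full_even_rows_is_polyomino => [r c even_r | r]; rewrite mxE.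
    by apply: contra even_r => /perm_hole_odd /andP [].
  by apply/negP => /perm_hole_odd /andP [].
- apply: not_submatrix_Hp => r1 r2 c /hole_of h1 /hole_of h2.
  exact/ord_inj/(perm_hole_col_uniq h1 h2).
- apply: not_submatrix_Vp => r c1 c2 /hole_of h1 /hole_of h2.
  exact/ord_inj/(perm_hole_row_uniq h1 h2).
Qed.

Lemma perm_square_inj n : injective (@perm_square n).
Proof.
move=> s t st; apply: perm_hole_graph_inj => i.
have double_lt (j : 'I_(n./2)) : j.*2.+1 < n by have := ltn_ord j; lia.
have := congr1 (fun M : 'M[bool]_(n, n) =>
  M (Ordinal (double_lt i)) (Ordinal (double_lt (s i)))) st.
by rewrite /= !mxE => /negb_inj <-; apply: perm_hole_graph.
Qed.

Theorem proposition19 (n : nat) : 0 < n -> (n./2)`! <= cp n.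
Proof.
case: n => [//|n] _.
have := card_perm [set: 'I_(n.+1./2)]; rewrite cardsT card_ord => <-.
rewrite -(card_imset _ (@perm_square_inj n.+1)).
apply/subset_leq_card/subsetP => _ /imsetP [s _ ->].
by rewrite inE perm_square_in_Cp.
Qed.
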